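(* For all integers $n, m, k \ge 0$, the map $\phi$ defined below restricts to a bijection from the set of Dyck paths of semilength $n$ with $m$ contacts and $k$ up-steps at odd height onto the set of Dyck paths of semilength $n$ with $m$ contacts and $k$ peaks. Definition of $\phi:\mathcal D\to\mathcal D$ (on Dyck words): $\phi(\epsilon)=\epsilon$ for the empty word $\epsilon$. A nonempty Dyck word $W$ whose path has $s\ge 0$ down-steps at height $2$ before its first contact decomposes uniquely as $W = U\big(\prod_{i=1}^{s} U W_i D\big) D W_{s+1}$ with each $W_i$ a Dyck word, and then $$\phi(W) = \Big(\prod_{i=1}^{s} U\,\phi(W_i)\Big)\, U D\, D^{s}\, \phi(W_{s+1}).$$
   Context: Paths have steps $(1,1)$ (up-step, letter $U$) and $(1,-1)$ (down-step, letter $D$), start at $(0,0)$; paths and words in $\{U,D\}$ are identified. A Dyck path is such a path ending on the line $y=0$ with no vertex of negative $y$-coordinate; a Dyck word is the corresponding word (equal numbers of $U$ and $D$, no prefix with more $D$s than $U$s). $\mathcal D$ denotes the set of Dyck paths/words. The semilength of a path is half its number of steps. An up-step is at height $j$ if it goes from $(i-1,j-1)$ to $(i,j)$; a down-step is at height $j$ if it goes from $(i,j)$ to $(i+1,j-1)$; a step is at odd height if $j$ is odd. A peak is an up-step immediately followed by a down-step. A contact is a down-step at height $1$ or an up-step at height $0$. Products $\prod$ denote concatenation of words, $D^s$ is $s$ copies of $D$. *)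

From mathcomp Require Import all_boot.
Set Implicit Arguments. Unset Strict Implicit. Unset Printing Implicit Defensive.

Definition U := true.
Definition D := false.

Fixpoint dyck_h (h : nat) (w : seq bool) : bool :=
  match w with
  | [::] => h == 0
  | b :: w' => if b then dyck_h h.+1 w' else (0 < h) && dyck_h h.-1 w'
  end.
Definition dyck (w : seq bool) : bool := dyck_h 0 w.

(* number of down-steps at height 1 (a down-step from height h to h-1 is at height h) *)
Fixpoint contacts_h (h : nat) (w : seq bool) : nat :=
  match w with
  | [::] => 0
  | b :: w' => if b then contacts_h h.+1 w' else (h == 1) + contacts_h h.-1 w'
  end.
Definition contacts (w : seq bool) : nat := contacts_h 0 w.

(* number of up-steps at odd height (an up-step from h to h+1 is at height h+1) *)
Fixpoint oddups_h (h : nat) (w : seq bool) : nat :=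
  match w with
  | [::] => 0
  | b :: w' => if b then odd h.+1 + oddups_h h.+1 w' else oddups_h h.-1 w'
  end.
Definition oddups (w : seq bool) : nat := oddups_h 0 w.

Fixpoint peaks (w : seq bool) : nat :=
  match w with
  | b :: ((c :: _) as w') => (b && ~~ c) + peaks w'
  | _ => 0
  end.

(* For a Dyck word U A D B (A, B Dyck, the displayed D being the first return),
   split_ret 1 (A ++ D :: B) = (A, B). *)
Fixpoint split_ret (h : nat) (w : seq bool) : seq bool * seq bool :=
  match w with
  | [::] => ([::], [::])
  | b :: w' =>
    if b then let: (a, r) := split_ret h.+1 w' in (true :: a, r)
    else if h <= 1 then ([::], w')
    else let: (a, r) := split_ret h.-1 w' in (false :: a, r)
  end.

(* factors_f: a Dyck word A = (U W_1 D)(U W_2 D)...(U W_s D) is sent to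
   [:: W_1; ...; W_s]  (fuel-bounded, fuel = size suffices). *)
Fixpoint factors_f (fuel : nat) (a : seq bool) : seq (seq bool) :=
  match fuel with
  | 0 => [::]
  | f.+1 =>
    match a with
    | [::] => [::]
    | _ :: a' => let: (x, y) := split_ret 1 a' in x :: factors_f f y
    end
  end.

(* phi on Dyck words:  phi(eps) = eps, and for
   W = U (prod_{i=1}^s U W_i D) D W_{s+1},
   phi(W) = (prod_{i=1}^s U phi(W_i)) U D D^s phi(W_{s+1}).
   Fuel-bounded recursion; phi uses fuel = size w, which is sufficient. *)
Fixpoint phi_f (fuel : nat) (w : seq bool) : seq bool :=
  match fuel with
  | 0 => [::]
  | f.+1 =>
    match w with
    | [::] => [::]
    | _ :: w' =>
      let: (a, b) := split_ret 1 w' in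
      let ws := factors_f f a in
      flatten [seq U :: phi_f f x | x <- ws]
        ++ [:: U; D] ++ nseq (size ws) D ++ phi_f f b
    end
  end.
Definition phi (w : seq bool) : seq bool := phi_f (size w) w.

Definition src_set (n m k : nat) (w : seq bool) : Prop :=
  [/\ dyck w, size w = n.*2, contacts w = m & oddups w = k].
Definition tgt_set (n m k : nat) (w : seq bool) : Prop :=
  [/\ dyck w, size w = n.*2, contacts w = m & peaks w = k].

Example ex1 : phi [:: U; U; D; U; D; D; U; D] = [:: U; U; U; D; D; D; U; D].
Proof. by []. Qed.

(* A nonempty Dyck word is U A D B (first return), and A is a product of
   arches U W_1 D ... U W_s D.  Writing nest [p_1; ...; p_s] for the word
   p_1 U p_2 U ... U p_s D ... D, the definition of phi reads
   phi (U A D B) = U (nest [phi W_1; ...; phi W_s]) D (phi B), and every Dyck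
   word is also of the form U (nest ps) D Z (iterate the last return).
   Both forms start with one contact followed by the rest, so contacts are
   preserved.  In U A D B the W_i sit at height 2, so
   oddups (U A D B) = 1 + sum_i oddups W_i + oddups B, while the peaks of
   U (nest ps) D Z are those of the p_i, those of Z, and the innermost U D;
   induction gives peaks (phi W) = oddups W.  Induction along the nested
   decomposition shows that phi is onto the Dyck words; as it preserves
   length, it is then injective by counting. *)

From mathcomp Require Import all_boot zify.
Set Implicit Arguments. Unset Strict Implicit.

Lemma size_preserving_surj_inj (T : finType) (P : pred (seq T)) (f : seq T -> seq T) :
  {in P, forall w, P (f w) /\ size (f w) = size w} ->
  {in P, forall v, exists2 w, P w & f w = v} ->
  {in P &, injective f}.
Proof.
move=> fP fsurj w1 w2 Pw1 Pw2 Ef.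
have Es : size w2 = size w1 by rewrite -(fP w1 Pw1).2 Ef (fP w2 Pw2).2.
pose t1 := in_tuple w1; pose t2 : (size w1).-tuple T := insubd t1 w2.
have t2E : val t2 = w2 by rewrite val_insubd Es eqxx.
pose g (t : (size w1).-tuple T) : (size w1).-tuple T := insubd t (f t).
have gE (t : (size w1).-tuple T) : P t -> val (g t) = f t.
  by move=> Pt; rewrite val_insubd (fP t Pt).2 size_tuple eqxx.
pose A := [set t : (size w1).-tuple T | P t].
have g_inj : {in A &, injective g}.
  apply/imset_injP; rewrite eqn_leq leq_imset_card subset_leq_card //.
  apply/subsetP => t; rewrite inE => Pt.
  have [w Pw fw] := fsurj _ Pt.
  have sw : size w == size w1 by rewrite -(fP w Pw).2 fw size_tuple.
  apply/imsetP; exists (insubd t w); first by rewrite inE val_insubd sw.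
  by apply: val_inj; rewrite gE val_insubd sw.
have : t1 = t2 by apply: g_inj; rewrite ?inE ?t2E //; apply: val_inj; rewrite !gE ?t2E.
by move/(congr1 val); rewrite t2E.
Qed.

Lemma dyck_h_cat x y h j : dyck_h j x -> dyck_h (h + j) (x ++ y) = dyck_h h y.
Proof.
elim: x j => [|b x IHx] j /=; first by move/eqP->; rewrite addn0.
case: b => [/IHx|/andP[j_gt0 /IHx]]; first by rewrite addnS.
by case: j j_gt0 => // j _; rewrite addnS.
Qed.

Lemma dyck_cat x y : dyck x -> dyck (x ++ y) = dyck y.
Proof. exact: (@dyck_h_cat x y 0 0). Qed.

Lemma dyck_arch Y Z : dyck Y -> dyck (U :: Y ++ D :: Z) = dyck Z.
Proof. by move=> dY; rewrite /dyck /= -[1]addn0 dyck_h_cat. Qed.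

Lemma split_ret_cat x y j : dyck_h j x -> split_ret j.+1 (x ++ D :: y) = (x, y).
Proof.
elim: x j => [|b x IHx] j /=; first by move/eqP->.
case: b => [/IHx -> //|/andP[j_gt0 /IHx]].
by case: j j_gt0 => // j _ /= ->.
Qed.

Lemma dyck_h_first_return w h : dyck_h h.+1 w ->
  exists A B, [/\ w = A ++ D :: B, dyck A & dyck_h h B].
Proof.
move: (leqnn (size w)); elim: (size w) {-2}w h => [|n IHn] [|b w'] h //= sw.
case: b => dw; last by exists [::], w'.
have [A1 [B1 [Ew' dA1 dB1]]] := IHn w' h.+1 sw dw.
have sB1 : size B1 <= n by move: sw; rewrite Ew' size_cat /=; lia.
rewrite {}Ew'; have [A2 [B2 [-> dA2 dB2]]] := IHn B1 h sB1 dB1.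
exists (U :: A1 ++ D :: A2), B2; split => //; first by rewrite /= -!catA.
by rewrite dyck_arch.
Qed.

Lemma dyck_first_return w : dyck w -> w != [::] ->
  exists Y Z, [/\ w = U :: Y ++ D :: Z, dyck Y & dyck Z].
Proof.
case: w => [|[] w] // dw _; have [Y [Z [-> dY dZ]]] := dyck_h_first_return dw.
by exists Y, Z.
Qed.

Lemma dyck_first_return_ind (P : seq bool -> Prop) :
  P [::] ->
  (forall Y Z, dyck Y -> dyck Z ->
     (forall y, dyck y -> size y <= size Y -> P y) -> P Z -> P (U :: Y ++ D :: Z)) ->
  forall w, dyck w -> P w.
Proof.
move=> P0 Parch w0; move: (leqnn (size w0)).
elim: (size w0) {-2}w0 => [|n IHn] w sw dw; first by case: w sw {dw}.
have [->|w_nil] := eqVneq w [::]; first exact: P0.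
have [Y [Z [Ew dY dZ]]] := dyck_first_return dw w_nil; subst w.
move: sw; rewrite /= size_cat /= => sw.
apply: Parch => // [y dy sy|]; apply: IHn => //; lia.
Qed.

Definition arches (ws : seq (seq bool)) : seq bool :=
  flatten [seq U :: x ++ [:: D] | x <- ws].

Fixpoint nest (ps : seq (seq bool)) : seq bool :=
  if ps is p :: ps' then p ++ U :: nest ps' ++ [:: D] else [::].

Lemma arches_cons x ws : arches (x :: ws) = U :: x ++ D :: arches ws.
Proof. by rewrite /arches /= -catA. Qed.

Lemma arches_rcons ws x : arches (rcons ws x) = arches ws ++ U :: x ++ [:: D].
Proof. by rewrite /arches map_rcons flatten_rcons. Qed.

Lemma dyck_arches ws : all dyck ws -> dyck (arches ws).
Proof.
by elim: ws => // x ws IHws /andP[dx dws]; rewrite arches_cons dyck_arch ?IHws.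
Qed.

Lemma dyck_nest ps : all dyck ps -> dyck (nest ps).
Proof. by elim: ps => // p ps IHps /andP[dp dps] /=; rewrite dyck_cat ?dyck_arch ?IHps. Qed.

Lemma size_arches_mem (ws : seq (seq bool)) (x : seq bool) :
  x \in ws -> size x < size (arches ws).
Proof.
elim: ws => // y ws IHws; rewrite in_cons arches_cons /= size_cat /=.
by case/orP => [/eqP->|/IHws ?]; lia.
Qed.

Lemma size_nest_mem (ps : seq (seq bool)) (p : seq bool) :
  p \in ps -> size p <= size (nest ps).
Proof.
elim: ps => // q ps IHps; rewrite in_cons /= size_cat /= size_cat.
by case/orP => [/eqP->|/IHps ?]; lia.
Qed.

Lemma size_arches ws : size ws <= size (arches ws).
Proof. by elim: ws => // x ws IHws; rewrite arches_cons /= size_cat /=; lia. Qed.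

Lemma size_nest_map (f : seq bool -> seq bool) ws :
  {in ws, forall x, size (f x) = size x} -> size (nest (map f ws)) = size (arches ws).
Proof.
elim: ws => // x ws IHws sf; rewrite arches_cons /= !size_cat /= size_cat.
by rewrite IHws => [|y wy]; rewrite ?sf ?mem_head ?addn1 ?addnS // inE wy orbT.
Qed.

Lemma arches_of_dyck A : dyck A -> exists2 ws, all dyck ws & A = arches ws.
Proof.
move: (leqnn (size A)); elim: (size A) {-2}A => [|n IHn] {}A sA dA.
  by exists [::]; case: A sA {dA}.
have [->|A0] := eqVneq A [::]; first by exists [::].
have [X [Y [EA dX dY]]] := dyck_first_return dA A0; subst A.
move: sA; rewrite /= size_cat /= => sA.
have [ws dws ->] := IHn Y ltac:(lia) dY.
by exists (X :: ws); rewrite ?arches_cons //= dX.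
Qed.

Lemma nest_of_dyck Y : dyck Y -> exists2 ps, all dyck ps & Y = nest ps.
Proof.
move: (leqnn (size Y)); elim: (size Y) {-2}Y => [|n IHn] {}Y sY dY.
  by exists [::]; case: Y sY {dY}.
have [ws dws EY] := arches_of_dyck dY.
case/lastP: ws dws EY => [|ws x]; first by exists [::].
rewrite all_rcons arches_rcons => /andP[dx dws] EY.
have sx : size x <= n by move: sY; rewrite EY size_cat /= size_cat /=; lia.
have [ps dps Ex] := IHn x sx dx.
by exists (arches ws :: ps); rewrite /= ?dyck_arches ?EY ?Ex.
Qed.

Lemma dyck_arches_ind (P : seq bool -> Prop) :
  P [::] ->
  (forall ws B, all dyck ws -> dyck B -> {in ws, forall x, P x} -> P B ->
     P (U :: arches ws ++ D :: B)) ->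
  forall w, dyck w -> P w.
Proof.
move=> P0 Parch; apply: dyck_first_return_ind => // Y Z dY dZ IHY IHZ.
have [ws dws EY] := arches_of_dyck dY; subst Y.
apply: Parch => // x wx; apply: IHY; first exact: (allP dws).
exact: ltnW (size_arches_mem wx).
Qed.

Lemma dyck_nest_ind (P : seq bool -> Prop) :
  P [::] ->
  (forall ps Z, all dyck ps -> dyck Z -> {in ps, forall p, P p} -> P Z ->
     P (U :: nest ps ++ D :: Z)) ->
  forall w, dyck w -> P w.
Proof.
move=> P0 Parch; apply: dyck_first_return_ind => // Y Z dY dZ IHY IHZ.
have [ps dps EY] := nest_of_dyck dY; subst Y.
apply: Parch => // p wp; apply: IHY; first exact: (allP dps).
exact: size_nest_mem.
Qed.

Lemma factors_f_arches f ws : all dyck ws -> size ws <= f -> factors_f f (arches ws) = ws.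
Proof.
elim: ws f => [|x ws IHws] [|f] // /andP[dx dws] sws.
by rewrite arches_cons /= split_ret_cat // IHws.
Qed.

Lemma nest_flatten (g : seq bool -> seq bool) ws Z :
  flatten [seq U :: g x | x <- ws] ++ [:: U, D & nseq (size ws) D ++ Z]
  = U :: nest (map g ws) ++ D :: Z.
Proof.
elim: ws Z => //= x ws IHws Z.
have -> : D :: nseq (size ws) D ++ Z = nseq (size ws) D ++ D :: Z.
  by elim: (size ws) => //= n <-.
by rewrite -!catA /= IHws -catA.
Qed.

Lemma phi_f_arch f ws B : all dyck ws -> size ws <= f ->
  phi_f f.+1 (U :: arches ws ++ D :: B) = U :: nest (map (phi_f f) ws) ++ D :: phi_f f B.
Proof.
move=> dws sws.
rewrite /= split_ret_cat; last exact: dyck_arches.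
by rewrite factors_f_arches // nest_flatten.
Qed.

Lemma phi_fE w : dyck w -> forall f, size w <= f -> phi_f f w = phi w.
Proof.
move: w; apply: dyck_arches_ind => [[]//|ws B dws dB IHws IHB].
set w := U :: _; have sw : size w = (size (arches ws) + size B).+2.
  by rewrite /= size_cat addnS.
have sws := size_arches ws.
have phi_f_w f : size w <= f.+1 -> phi_f f.+1 w = U :: nest (map phi ws) ++ D :: phi B.
  rewrite sw => swf; rewrite phi_f_arch ?IHB; try lia.
  congr (_ :: nest _ ++ _); apply/eq_in_map => x wx.
  by apply: IHws => //; have := size_arches_mem wx; lia.
by move=> [|f]; rewrite sw // => swf; rewrite /phi sw !phi_f_w ?sw.
Qed.

Lemma phi_arch ws B : all dyck ws -> dyck B ->
  phi (U :: arches ws ++ D :: B) = U :: nest (map phi ws) ++ D :: phi B.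
Proof.
move=> dws dB; set s := size (arches ws ++ D :: B).
have -> : phi (U :: arches ws ++ D :: B) = phi_f s.+1 (U :: arches ws ++ D :: B) by [].
have [sws sB] : size ws <= s /\ size B <= s.
  by have := size_arches ws; rewrite /s size_cat /=; lia.
rewrite phi_f_arch ?phi_fE //; congr (_ :: nest _ ++ _); apply/eq_in_map => x wx.
by rewrite phi_fE ?(allP dws) // /s size_cat; have := size_arches_mem wx; lia.
Qed.

Lemma contacts_h_cat x y j : dyck_h j x -> contacts_h j.+1 (x ++ y) = contacts_h 1 y.
Proof.
elim: x j => [|b x IHx] j /=; first by move/eqP->.
case: b => [/IHx //|/andP[j_gt0 /IHx]].
by case: j j_gt0 => // j _ /= ->.
Qed.

Lemma contacts_arch Y Z : dyck Y -> contacts (U :: Y ++ D :: Z) = (contacts Z).+1.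
Proof. by move=> dY; rewrite /contacts /= contacts_h_cat. Qed.

Lemma oddups_h_cat x y h j : dyck_h j x ->
  oddups_h (h + j) (x ++ y) = oddups_h (h + j) x + oddups_h h y.
Proof.
elim: x j => [|b x IHx] j /=; first by move/eqP->; rewrite addn0.
case: b => [/IHx|/andP[j_gt0 /IHx]]; first by rewrite addnS -addnA => ->.
by case: j j_gt0 => // j _; rewrite addnS.
Qed.

Lemma oddups_h_double x i j : dyck_h j x -> oddups_h (i.*2 + j) x = oddups_h j x.
Proof.
elim: x j => [|b x IHx] j //=.
case: b => [/IHx|/andP[j_gt0 /IHx]]; first by rewrite -addnS => ->; rewrite oddD odd_double.
by case: j j_gt0 => // j _; rewrite addnS.
Qed.

Lemma oddups_arch Y Z : dyck Y -> oddups (U :: Y ++ D :: Z) = (oddups_h 1 Y + oddups Z).+1.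
Proof. by move=> dY; rewrite /oddups /= -[1]addn0 oddups_h_cat. Qed.

Lemma oddups_arches ws : all dyck ws -> oddups_h 1 (arches ws) = sumn (map oddups ws).
Proof.
elim: ws => // x ws IHws /andP[dx dws]; rewrite arches_cons /=.
by rewrite -[2]addn0 oddups_h_cat // (oddups_h_double 1) //= IHws.
Qed.

Lemma peaks_cat x y : peaks (x ++ y) = peaks x + peaks y + (last D x && ~~ head U y).
Proof.
elim: x => [|b x IHx] /=; first by rewrite addn0.
case: x IHx => [|c x] IHx; first by case: y {IHx} => [|c y] /=; rewrite ?andbF // addnC.
by move: IHx => /= ->; rewrite !addnA.
Qed.

Lemma peaks_nest_arch ps Z : all dyck ps ->
  peaks (U :: nest ps ++ D :: Z) = (sumn (map peaks ps) + peaks Z).+1.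
Proof.
elim: ps Z => [|p ps IHps] Z; first by case: Z.
move=> /andP[dp dps]; set Y := U :: nest ps ++ D :: D :: Z.
have -> : U :: nest (p :: ps) ++ D :: Z = [:: U] ++ (p ++ Y).
  by rewrite /Y /= -!catA /= -catA.
have p_head : head U (p ++ Y) by case: p dp {IHps} => [|[]].
rewrite peaks_cat p_head peaks_cat /Y IHps //; clear Y p_head.
have -> : peaks (D :: Z) = peaks Z by case: Z.
by rewrite /= andbF; lia.
Qed.

Lemma dyck_phi w : dyck w -> dyck (phi w).
Proof.
move: w; apply: dyck_arches_ind => // ws B dws dB IHws IHB.
rewrite phi_arch // dyck_arch // dyck_nest //.
by apply/allP => _ /mapP[x wx ->]; apply: IHws.
Qed.

Lemma all_dyck_phi ws : all dyck ws -> all dyck (map phi ws).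
Proof. by move=> dws; apply/allP => _ /mapP[x wx ->]; apply/dyck_phi/(allP dws). Qed.

Lemma size_phi w : dyck w -> size (phi w) = size w.
Proof.
move: w; apply: dyck_arches_ind => // ws B dws dB IHws IHB.
by rewrite phi_arch //= !size_cat /= size_nest_map // IHB.
Qed.

Lemma contacts_phi w : dyck w -> contacts (phi w) = contacts w.
Proof.
move: w; apply: dyck_arches_ind => // ws B dws dB _ IHB.
by rewrite phi_arch // !contacts_arch ?IHB ?dyck_arches ?dyck_nest ?all_dyck_phi.
Qed.

Lemma peaks_phi w : dyck w -> peaks (phi w) = oddups w.
Proof.
move: w; apply: dyck_arches_ind => // ws B dws dB IHws IHB.
rewrite phi_arch // peaks_nest_arch ?all_dyck_phi // oddups_arch ?dyck_arches //.
rewrite oddups_arches // IHB -map_comp; congr (sumn _ + _).+1.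
exact/eq_in_map.
Qed.

Lemma phi_surj v : dyck v -> exists2 w, dyck w & phi w = v.
Proof.
move: v; apply: dyck_nest_ind => [|ps Z dps dZ IHps [wZ dwZ <-]]; first by exists [::].
have [ws dws <-] : exists2 ws, all dyck ws & map phi ws = ps.
  elim: ps {dps} IHps => [|p ps IH] IHps; first by exists [::].
  have [w dw <-] := IHps p (mem_head _ _).
  have [ws dws <-] := IH (fun q wq => IHps q (@mem_behead _ (p :: ps) q wq)).
  by exists (w :: ws); rewrite //= dw.
by exists (U :: arches ws ++ D :: wZ); rewrite ?dyck_arch ?dyck_arches ?phi_arch.
Qed.

Lemma phi_inj : {in dyck &, injective phi}.
Proof.
apply: size_preserving_surj_inj => [w dw|v dv]; last exact: phi_surj.
by rewrite dyck_phi ?size_phi.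
Qed.

Theorem theorem1 (n m k : nat) :
  [/\ (forall w, src_set n m k w -> tgt_set n m k (phi w)),
      (forall w1 w2, src_set n m k w1 -> src_set n m k w2 -> phi w1 = phi w2 -> w1 = w2)
    & (forall v, tgt_set n m k v -> exists2 w, src_set n m k w & phi w = v)].
Proof.
split.
- by move=> w [dw sw cw ow]; split; rewrite ?dyck_phi ?size_phi ?contacts_phi ?peaks_phi.
- by move=> w1 w2 [dw1 _ _ _] [dw2 _ _ _]; apply: phi_inj.
- move=> v [dv sv cv pv]; have [w dw Ev] := phi_surj dv; exists w => //; subst v.
  by split; rewrite // -?sv -?cv -?pv ?size_phi ?contacts_phi ?peaks_phi.
Qed.
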